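(* Let $G$ be a finite group and $H$ a normal subgroup of $G$ such that $G/H$ is cyclic. Suppose that the cosets $Hx$ and $Hy$ have equal order in the quotient group $G/H$. Then there exists a permutation $\sigma$ of the elements of $G$ such that (1) every subgroup of $G$ is $\sigma$-invariant; (2) for all $g_1,g_2\in G$, $(g_1\sigma)(g_2\sigma)=(g_2\sigma)(g_1\sigma)$ if and only if $g_1g_2=g_2g_1$; (3) $\sigma$ permutes the conjugacy classes of $G$; (4) $(Hx)\sigma = Hy$.
   Context: $g\sigma$ denotes the image of $g$ under $\sigma$. *)

From mathcomp Require Import all_boot all_fingroup all_solvable.
Set Implicit Arguments. Unset Strict Implicit. Unset Printing Implicit Defensive.

From mathcomp Require Import all_boot all_fingroup all_solvable.
Set Implicit Arguments. Unset Strict Implicit. Unset Printing Implicit Defensive.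

(* Write G/H = <Hx>.  Since Hy has the same order, Hy = (Hx)^i with i coprime
   to the order of Hx, and i lifts to an exponent k coprime to |G|.  The power
   map g |-> g^k is then a bijection of G that fixes every subgroup, preserves
   and reflects commutation (it is inverted by another power map), sends the
   class of g to the class of g^k, and maps Hx onto H x^k = Hy. *)

Lemma coprime_mod_lift m n k : 0 < n -> m %| n -> coprime m k ->
  exists2 k', coprime n k' & k' = k %[mod m].
Proof.
move=> n_gt0 dvd_mn co_mk; pose pi := \pi(m).
have m_gt0 : 0 < m by apply: dvdn_gt0 dvd_mn.
(* Shift k by m so that it is positive, as [coprime_pi'] requires. *)
have km_gt0 : 0 < k + m by rewrite addn_gt0 m_gt0 orbT.
have co_mkm : coprime m (k + m) by rewrite -coprime_modr modnDr coprime_modr.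
have co_parts : coprime n`_pi n`_pi^' by apply: coprime_partC.
have dvd_m_part : m %| n`_pi.
  by rewrite -{1}(part_pnat_id (pnat_pi m_gt0)) partn_dvd.
(* Take k' = k + m modulo the pi-part of n and k' = 1 modulo its pi'-part. *)
exists (chinese n`_pi n`_pi^' (k + m) 1); last first.
  rewrite -(modn_dvdm _ dvd_m_part) (chinese_modl co_parts).
  by rewrite (modn_dvdm _ dvd_m_part) modnDr.
rewrite -{1}(partnC pi n_gt0) coprime_sym coprimeMr; apply/andP; split.
  rewrite -(coprime_modl _ n`_pi) (chinese_modl co_parts) coprime_modl.
  rewrite coprime_sym.
  apply: (@pnat_coprime pi); first exact: part_pnat.
  by rewrite /pi -coprime_pi'.
rewrite -(coprime_modl _ n`_pi^') (chinese_modr co_parts) coprime_modl.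
exact: coprime1n.
Qed.

Lemma perm_imset_eq (T : finType) (s : {perm T}) (A B : {set T}) :
  s @: A \subset B -> #|B| <= #|A| -> s @: A = B.
Proof.
move=> sAB leBA; apply/eqP.
by rewrite eqEcard sAB card_imset //; apply: perm_inj.
Qed.

Local Open Scope group_scope.

Section PowerPerm.

Variables (gT : finGroupType) (G : {group gT}) (k : nat).
Hypothesis co_Gk : coprime #|G| k.

Definition power_fun g := if g \in G then g ^+ k else g.

Lemma mem_power_fun g : (power_fun g \in G) = (g \in G).
Proof. by rewrite /power_fun; case: ifP => // Gg; rewrite groupX. Qed.

Lemma power_fun_inj : injective power_fun.
Proof.
move=> g1 g2 eq_g; have := mem_power_fun g1; rewrite eq_g mem_power_fun => eqG.
move: eq_g; rewrite /power_fun eqG; case: ifP => // Gg1 eq_pow.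
by rewrite -(expgK co_Gk Gg1) /= eq_pow expgK // eqG.
Qed.

Definition power_perm := perm power_fun_inj.

Lemma power_permE g : g \in G -> power_perm g = g ^+ k.
Proof. by rewrite permE /power_fun => ->. Qed.

Lemma power_perm_on : perm_on G power_perm.
Proof.
apply/subsetP => g; rewrite inE permE /power_fun.
by case: ifP => // _; rewrite eqxx.
Qed.

Lemma power_perm_group (K : {group gT}) : K \subset G -> power_perm @: K = K.
Proof.
move=> sKG; apply: perm_imset_eq => //; apply/subsetP => _ /imsetP[g Kg ->].
by rewrite power_permE ?(subsetP sKG) ?groupX.
Qed.

Lemma power_perm_commute g1 g2 : g1 \in G -> g2 \in G ->
  commute (power_perm g1) (power_perm g2) <-> commute g1 g2.
Proof.
move=> Gg1 Gg2; rewrite !power_permE //; split; last exact: commuteX2.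
by move/(commuteX2 (expg_invn G k) (expg_invn G k)); rewrite !expgK.
Qed.

Lemma power_perm_class g : g \in G -> power_perm @: (g ^: G) = (g ^+ k) ^: G.
Proof.
move=> Gg; rewrite /class -imset_comp; apply: eq_in_imset => z Gz /=.
by rewrite power_permE ?groupJ // conjXg.
Qed.

Lemma power_perm_classes C : C \in classes G -> power_perm @: C \in classes G.
Proof.
by case/imsetP=> g Gg ->; rewrite power_perm_class // mem_classes ?groupX.
Qed.

Lemma power_perm_rcoset (H : {group gT}) x : H <| G -> x \in G ->
  power_perm @: (H :* x) = H :* x ^+ k.
Proof.
case/andP=> sHG nHG Gx; have NG := subsetP nHG.
apply: perm_imset_eq; last by rewrite !card_rcoset.
apply/subsetP => _ /imsetP[_ /rcosetP[h Hh ->] ->].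
have Ghx : h * x \in G by rewrite groupM // (subsetP sHG).
rewrite power_permE //; apply/rcoset_kercosetP; rewrite ?NG ?groupX //.
by rewrite !morphX ?NG // [coset_morphism H _]coset_kerl.
Qed.

End PowerPerm.

Lemma cyclic_quotient_rcoset_exp (gT : finGroupType) (G H : {group gT}) x y :
  H <| G -> cyclic (G / H) -> x \in G -> y \in G ->
  #[coset H x] = #[coset H y] ->
  exists2 k, coprime #|G| k & H :* y = H :* x ^+ k.
Proof.
move=> nsHG cycGH Gx Gy eq_ord; have NG := subsetP (normal_norm nsHG).
set a := coset H x; set b := coset H y.
have GHa : a \in G / H by apply: mem_quotient.
have eq_cyc : <[a]> = <[b]>.
  apply/eqP; rewrite (eq_subG_cyclic cycGH) ?cycle_subG ?mem_quotient //.
  exact/eqP.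
have /cycleP[i def_b] : b \in <[a]> by rewrite eq_cyc cycle_id.
have co_ai : coprime #[a] i.
  by rewrite -generator_coprime -def_b /generator eq_cyc.
have dvd_aG : #[a] %| #|G| := dvdn_trans (order_dvdG GHa) (dvdn_quotient _ _).
have [k co_Gk eq_ki] := coprime_mod_lift (cardG_gt0 G) dvd_aG co_ai.
exists k => //; apply/rcoset_eqP/rcoset_kercosetP; rewrite ?NG ?groupX //.
by rewrite morphX ?NG // -/a -/b def_b -expg_mod_order -eq_ki expg_mod_order.
Qed.

Theorem lemma2p3 (gT : finGroupType) (G H : {group gT}) (x y : gT) :
  H <| G -> cyclic (G / H) -> x \in G -> y \in G ->
  #[coset H x] = #[coset H y] ->
  exists sigma : {perm gT},
    [/\ perm_on G sigma,
        (forall K : {group gT}, K \subset G -> sigma @: K = K),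
        (forall g1 g2, g1 \in G -> g2 \in G ->
           commute (sigma g1) (sigma g2) <-> commute g1 g2),
        (forall C, C \in classes G -> sigma @: C \in classes G)
      & sigma @: (H :* x) = H :* y].
Proof.
move=> nsHG cycGH Gx Gy eq_ord.
have [k co_Gk ->] := cyclic_quotient_rcoset_exp nsHG cycGH Gx Gy eq_ord.
exists (power_perm co_Gk); split.
- exact: power_perm_on.
- exact: power_perm_group.
- exact: power_perm_commute.
- exact: power_perm_classes.
exact: power_perm_rcoset.
Qed.
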